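(* Let \((Q, \preccurlyeq_{Q})\) be a totally ordered set with \(|Q| > 1\) having a smallest element \(q_0\). Then the following conditions are equivalent. (i) The order topology of \((Q,\preccurlyeq_Q)\) is second countable. (ii) For every \(\preccurlyeq_{Q}\)-pseudoultrametric \(d\) there is a pseudoultrametric \(\rho\) such that \(d\) and \(\rho\) are weakly similar. (iii) For every \(\preccurlyeq_{Q}\)-pseudoultrametric \(d\) there is a pseudoultrametric \(\rho\) such that \(d\) and \(\rho\) are combinatorially similar.
   Context: The order topology on a totally ordered \((Q,\preccurlyeq_Q)\) is the topology with subbase consisting of all sets \(\{q\in Q: q\prec_Q a\}\) and \(\{q\in Q: a\prec_Q q\}\), \(a\in Q\). A pseudoultrametric on \(Z\) is a symmetric \(\rho\colon Z^2\to[0,\infty)\) with \(\rho(z,z)=0\) and \(\rho(x,y)\le\max\{\rho(x,z),\rho(z,y)\}\); it is regarded as valued in the poset \(([0,\infty),\le)\). For a poset \((Q,\preccurlyeq_Q)\) with smallest element \(q_0\), \(d\colon X^2\to Q\) (\(X\) nonempty) is a \(\preccurlyeq_Q\)-pseudoultrametric if \(d\) is symmetric, \(d(x,x)=q_0\) for all \(x\), and for every triple \(\langle x_1,x_2,x_3\rangle\) in \(X\) there is a permutation \((i_1,i_2,i_3)\) of \((1,2,3)\) with \(d(x_{i_1},x_{i_3})\preccurlyeq_Q d(x_{i_1},x_{i_2})=d(x_{i_2},x_{i_3})\). For a \(\preccurlyeq_Q\)-valued \(d\) on \(X\) and a real-valued \(\rho\) on \(Y\): they are combinatorially similar if there are bijections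 \(h\colon X\to Y\) and \(f\colon d(X^2)\to\rho(Y^2)\) with \(\rho(h(x),h(y))=f(d(x,y))\) for all \(x,y\in X\); they are weakly similar if this holds with \(f\) moreover an order isomorphism between the subposet \(d(X^2)\) of \((Q,\preccurlyeq_Q)\) and the subposet \(\rho(Y^2)\) of \(([0,\infty),\le)\). *)

From HB Require Import structures.
From mathcomp Require Import all_boot all_order all_algebra all_fingroup.
From mathcomp Require Import boolp classical_sets functions cardinality.
From mathcomp Require Import Rstruct.
From Stdlib Require Import Rdefinitions.
Set Implicit Arguments. Unset Strict Implicit. Unset Printing Implicit Defensive.
Import Order.TTheory.
Local Open Scope classical_set_scope.
Local Open Scope order_scope.

Section OrderTopology.
Context {disp : Order.disp_t} {Q : orderType disp}.

Definition order_subbase : set (set Q) :=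
  [set S | exists a : Q, S = [set q | q < a] \/ S = [set q | a < q]].

Definition order_open (U : set Q) : Prop :=
  forall x, U x -> exists s : seq (set Q),
    (forall S, S \in s -> order_subbase S) /\
    (forall S, S \in s -> S x) /\
    (forall y, (forall S, S \in s -> S y) -> U y).

Definition order_topology_second_countable : Prop :=
  exists B : set (set Q), countable B /\
    (forall b, B b -> order_open b) /\
    (forall U, order_open U -> forall x, U x -> exists b, [/\ B b, b x & b `<=` U]).

Definition Q_pseudoultrametric (q0 : Q) (X : Type) (d : X -> X -> Q) : Prop :=
  [/\ (exists x : X, True),
      (forall x y, d x y = d y x),
      (forall x, d x x = q0) &
      (forall t : 'I_3 -> X, exists s : 'S_3,
          d (t (s (inord 0))) (t (s (inord 2))) <= d (t (s (inord 0))) (t (s (inord 1))) /\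
          d (t (s (inord 0))) (t (s (inord 1))) = d (t (s (inord 1))) (t (s (inord 2))))].

Definition comb_similar (X Y : Type) (d : X -> X -> Q) (rho : Y -> Y -> R) : Prop :=
  exists (h : X -> Y) (f : Q -> R),
    [/\ bijective h,
        set_bij [set d x y | x in setT & y in setT] [set rho u v | u in setT & v in setT] f &
        forall x y, rho (h x) (h y) = f (d x y)].

Definition weak_similar (X Y : Type) (d : X -> X -> Q) (rho : Y -> Y -> R) : Prop :=
  exists (h : X -> Y) (f : Q -> R),
    [/\ bijective h,
        set_bij [set d x y | x in setT & y in setT] [set rho u v | u in setT & v in setT] f,
        (forall a b, [set d x y | x in setT & y in setT] a ->
                     [set d x y | x in setT & y in setT] b ->
                     (a <= b) <-> (f a <= f b)%R) &
        forall x y, rho (h x) (h y) = f (d x y)].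

End OrderTopology.

Definition pseudoultrametric (Z : Type) (rho : Z -> Z -> R) : Prop :=
  [/\ (forall x y, (0 <= rho x y)%R),
      (forall x y, rho x y = rho y x),
      (forall x, rho x x = 0%R) &
      (forall x y z, (rho x y <= Num.max (rho x z) (rho z y))%R)].

From mathcomp Require Import all_boot all_order all_algebra all_fingroup.
From mathcomp Require Import boolp classical_sets functions cardinality Rstruct reals.
From mathcomp Require Import lra.
From Stdlib Require Import Rdefinitions.
Set Implicit Arguments. Unset Strict Implicit. Unset Printing Implicit Defensive.
Import Order.TTheory GRing.Theory Num.Theory.
Local Open Scope order_scope.
Local Open Scope classical_set_scope.

(* Each condition says that Q embeds into (R, <) by a strictly increasing map g.
   If (b_n) is a countable base, the up-closures U_n of the b_n separate the points of Q
   (open rays are open), so q |-> sum of 2^-(n+1) over {n | U_n q} is such an embedding.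
   Conversely, g yields countably many points approximating each gap of Q from either
   side (one point of every nonempty g^-1 ]r, s[ with r, s rational, and the largest
   point below each rational cut that falls into a jump of g), and the finite
   intersections of rays ending at these points form a countable base.
   Composing a Q-pseudoultrametric with g - g q0 gives a weakly similar real one.
   Finally, d p q := max p q (p <> q) is a Q-pseudoultrametric taking every value, and
   the value map f of a combinatorial similarity with a pseudoultrametric rho satisfies
   f p = rho(q0, p) <= max (rho(q0, q), rho(q, p)) = f q for p < q. *)

Lemma le_min3 (disp : Order.disp_t) (T : orderType disp) (a b c : T) :
  [\/ a <= b /\ a <= c, b <= a /\ b <= c | c <= a /\ c <= b].
Proof.
case: (leP a b) => ab; case: (leP a c) => ac.
- by constructor 1.
- by constructor 3; split; [apply: ltW | apply: ltW (lt_le_trans ac ab)].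
- by constructor 2; split; [apply: ltW | apply: le_trans (ltW ab) ac].
- case: (leP b c) => bc; first by constructor 2; split; [apply: ltW|].
  by constructor 3; split; apply: ltW.
Qed.

Section Ultrametric.
Context {disp : Order.disp_t} {Q : orderType disp} {X : Type} (d : X -> X -> Q).
Hypothesis d_sym : forall x y, d x y = d y x.

Lemma isosceles_of_max_le :
  (forall x y z, d x y <= Order.max (d x z) (d z y)) -> forall x y z,
  d x z <= d x y -> d x z <= d z y -> d x y = d z y.
Proof.
move=> ultra x y z xz_xy xz_zy; apply/le_anti; apply/andP; split.
- by apply: le_trans (ultra x y z) _; rewrite ge_max xz_zy lexx.
- by apply: le_trans (ultra z y x) _; rewrite ge_max d_sym xz_xy lexx.
Qed.

Lemma Q_pseudoultrametric_max_le (q0 : Q) :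
  Q_pseudoultrametric q0 d -> forall x y z, d x y <= Order.max (d x z) (d z y).
Proof.
case=> _ _ _ triangle x y z.
have [s [le_s eq_s]] := triangle (fun i : 'I_3 => nth x [:: x; y; z] i).
have s_neq (i j : nat) : i < 3 -> j < 3 -> i != j -> s (inord i) != s (inord j).
  move=> i3 j3 ij; rewrite (inj_eq perm_inj).
  by apply: contra ij => /eqP/(congr1 (@nat_of_ord 3)); rewrite !inordK // => ->.
(* Case on the six labellings s; in each, the two largest distances coincide. *)
move: (s_neq 0 1 isT isT isT) (s_neq 0 2 isT isT isT) (s_neq 1 2 isT isT isT) le_s eq_s.
move: (s (inord 0)) (s (inord 1)) (s (inord 2)) => [[|[|[|?]]] ?] // [[|[|[|?]]] ?] //.
all: move=> [[|[|[|?]]] ?] //= _ _ _; rewrite ?(d_sym y x) ?(d_sym z x) ?(d_sym z y).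
all: by move=> le eq; rewrite le_max ?le ?eq ?lexx ?orbT.
Qed.

Lemma Q_pseudoultrametric_of_max_le (q0 : Q) (x0 : X) :
  (forall x, d x x = q0) -> (forall x y z, d x y <= Order.max (d x z) (d z y)) ->
  Q_pseudoultrametric q0 d.
Proof.
move=> d_refl ultra; split; [by exists x0 | exact: d_sym | exact: d_refl |].
move=> t; set a := t (inord 0); set b := t (inord 1); set c := t (inord 2).
have isosceles := isosceles_of_max_le ultra.
have [i10 i20 i02 i12] : [/\ inord 1 != inord 0 :> 'I_3, inord 2 != inord 0 :> 'I_3,
                           inord 0 != inord 2 :> 'I_3 & inord 1 != inord 2 :> 'I_3].
  by split; apply/negP => /eqP/(congr1 (@nat_of_ord 3)); rewrite !inordK.
case: (le_min3 (d a c) (d a b) (d b c)) => [[ac_ab ac_bc]|[ab_ac ab_bc]|[bc_ac bc_ab]].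
- exists 1%g; rewrite !perm1 -/a -/b -/c; split => //.
  by rewrite (d_sym b c); apply: isosceles; rewrite // (d_sym c b).
- exists (tperm (inord 1) (inord 2)).
  rewrite tpermR tpermL (tpermD i10 i20) -/a -/b -/c; split => //.
  by rewrite (d_sym c b); apply: isosceles.
- exists (tperm (inord 0) (inord 1)).
  rewrite tpermR tpermL (tpermD i02 i12) -/a -/b -/c (d_sym a c).
  by split; [|apply: isosceles]; rewrite ?(d_sym b a) ?(d_sym c a).
Qed.

End Ultrametric.

Definition real_order_embeddable (disp : Order.disp_t) (Q : orderType disp) : Prop :=
  exists g : Q -> R, {homo g : p q / p < q}.

Section MinimalElement.
Context {disp : Order.disp_t} {Q : orderType disp} (q0 : Q).
Hypothesis q0_min : forall q : Q, q0 <= q.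

Definition max_dist (p q : Q) : Q := if p == q then q0 else Order.max p q.

Lemma max_dist_q0l (q : Q) : max_dist q0 q = q.
Proof. by rewrite /max_dist; case: eqP => [->|_]; last exact: max_r. Qed.

Lemma max_dist_Q_pseudoultrametric : Q_pseudoultrametric q0 max_dist.
Proof.
have dsym (p q : Q) : max_dist p q = max_dist q p by rewrite /max_dist eq_sym maxC.
apply: Q_pseudoultrametric_of_max_le => //; first by move=> q; rewrite /max_dist eqxx.
move=> x y z; rewrite le_max.
case: (eqVneq x y) => [->|xy]; first by rewrite /max_dist eqxx q0_min.
case: (eqVneq x z) => [<-|xz]; first by rewrite lexx orbT.
case: (eqVneq z y) => [->|zy]; first by rewrite lexx.
rewrite /max_dist (negbTE xy) (negbTE xz) (negbTE zy) -le_max.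
by rewrite ge_max !le_max !lexx !orbT.
Qed.

Lemma comb_similar_max_dist_embeddable (Y : Type) (rho : Y -> Y -> R) :
  pseudoultrametric rho -> comb_similar max_dist rho -> real_order_embeddable Q.
Proof.
case=> _ _ _ rho_ultra [h [f [_ [_ f_inj _] rho_f]]].
have {}f_inj (p q : Q) : f p = f q -> p = q.
  have dist_onto (r : Q) : r \in [set max_dist x y | x in setT & y in setT].
    by rewrite inE; exists q0 => //; exists r => //; apply: max_dist_q0l.
  by apply: f_inj; apply: dist_onto.
exists f => p q pq; rewrite lt_neqAle; apply/andP; split.
  by apply: contraTneq pq => /f_inj ->; rewrite ltxx.
have dist_qp : max_dist q p = q by rewrite /max_dist gt_eqF // max_l // ltW.
apply/RleP; move: (rho_ultra (h q0) (h p) (h q)).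
by rewrite !rho_f !max_dist_q0l dist_qp maxxx.
Qed.

Variables (X : Type) (d : X -> X -> Q) (g : Q -> R).
Hypotheses (d_ultra : Q_pseudoultrametric q0 d) (g_incr : {homo g : p q / p < q}).
Local Open Scope ring_scope.

Lemma pseudoultrametric_comp : pseudoultrametric (fun x y => g (d x y) - g q0).
Proof.
have g_le := le_mono g_incr.
case: (d_ultra) => _ d_sym d_refl _; split => [x y|x y|x|x y z].
- by apply/RleP; rewrite subr_ge0 g_le.
- by rewrite d_sym.
- by rewrite d_refl subrr.
- apply/RleP; rewrite le_max !lerD2r !g_le -le_max.
  exact: Q_pseudoultrametric_max_le d_ultra x y z.
Qed.

Lemma weak_similar_comp : weak_similar d (fun x y => g (d x y) - g q0).
Proof.
have f_mono : {mono (fun q => g q - g q0) : p q / (p <= q)%O}.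
  by move=> p q; rewrite lerD2r (le_mono g_incr).
exists id, (fun q => g q - g q0); split => //; first by exists id.
- split.
  + by move=> _ [x _ [y _ <-]]; exists x => //; exists y.
  + by move=> p q _ _; exact: (inc_inj f_mono).
  + by move=> _ [x _ [y _ <-]]; exists (d x y) => //; exists x => //; exists y.
- by move=> p q _ _; split => [pq|/RleP]; [apply/RleP; rewrite f_mono | rewrite f_mono].
Qed.

Lemma embeddable_weak_similar : exists (Y : Type) (rho : Y -> Y -> R),
  pseudoultrametric rho /\ weak_similar d rho.
Proof.
exists X, (fun x y => g (d x y) - g q0).
by split; [apply: pseudoultrametric_comp | apply: weak_similar_comp].
Qed.

End MinimalElement.

Lemma weak_similar_comb_similar (disp : Order.disp_t) (Q : orderType disp) (X Y : Type)
    (d : X -> X -> Q) (rho : Y -> Y -> R) :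
  weak_similar d rho -> comb_similar d rho.
Proof. by move=> [h [f [h_bij f_bij _ rho_f]]]; exists h, f. Qed.

Section SeparatingUpsets.
Context {disp : Order.disp_t} {Q : orderType disp} (U : nat -> set Q).
Hypothesis U_upper : forall n p q, (p <= q)%O -> U n p -> U n q.
Hypothesis U_separates : forall p q, (p < q)%O -> exists n, U n q /\ ~ U n p.
Local Open Scope ring_scope.

Let weight n : R := 2^-1 ^+ n.+1.
Let digit n q : R := if `[< U n q >] then weight n else 0.
Let partial q N : R := \sum_(n < N) digit n q.

Lemma weight_gt0 n : 0 < weight n.
Proof. by rewrite exprn_gt0 ?invr_gt0. Qed.

Lemma digit_le_weight n q : digit n q <= weight n.
Proof. by rewrite /digit; case: asboolP => // _; rewrite ltW ?weight_gt0. Qed.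

Lemma sum_weight N : \sum_(n < N) weight n = 1 - 2^-1 ^+ N.
Proof.
elim: N => [|N IH]; first by rewrite big_ord0 expr0 subrr.
rewrite big_ord_recr /= IH /weight !exprS; lra.
Qed.

Lemma digit_ge0 n q : 0 <= digit n q.
Proof. by rewrite /digit; case: asboolP => // _; rewrite ltW ?weight_gt0. Qed.

Lemma digit_homo n p q : (p <= q)%O -> digit n p <= digit n q.
Proof.
move=> pq; rewrite /digit.
case: (asboolP (U n p)) => [Up|_]; case: (asboolP (U n q)) => [_|nUq] //.
- by case: nUq; apply: U_upper Up.
- by rewrite ltW ?weight_gt0.
Qed.

Lemma partial_le1 q N : partial q N <= 1.
Proof.
apply: le_trans (_ : \sum_(n < N) weight n <= 1).
  by apply: ler_sum => n _; apply: digit_le_weight.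
by rewrite sum_weight gerBl exprn_ge0 ?invr_ge0.
Qed.

Lemma partial_nondecreasing q : {homo partial q : N M / (N <= M)%O}.
Proof.
apply: Order.NatMonotonyTheory.nondecnP => N.
by rewrite /partial big_ord_recr lerDl digit_ge0.
Qed.

Lemma partial_gap m N p q : (m < N)%nat -> (p <= q)%O -> U m q -> ~ U m p ->
  partial p N + weight m <= partial q N.
Proof.
move=> mN pq Umq nUmp; rewrite addrC -lerBrDr /partial -sumrB (bigD1 (Ordinal mN)) //=.
have -> : digit m q - digit m p = weight m.
  by rewrite /digit; case: asboolP => // _; case: asboolP => // _; rewrite subr0.
by rewrite lerDl sumr_ge0 // => n _; rewrite subr_ge0 digit_homo.
Qed.

Let code q := sup (range (partial q)).

Lemma partial_le_code q N : partial q N <= code q.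
Proof.
apply: sup_upper_bound; last by exists N.
by split; [exists (partial q 0), 0 | exists 1 => _ [M _ <-]; apply: partial_le1].
Qed.

Lemma separating_upsets_embeddable : real_order_embeddable Q.
Proof.
exists code => p q pq; have [m [Umq nUmp]] := U_separates pq.
apply: le_lt_trans (_ : code q - weight m < code q); last first.
  by rewrite ltrBlDr ltrDl weight_gt0.
apply: ge_sup; first by exists (partial p 0), 0.
move=> _ [N _ <-]; rewrite lerBrDr.
apply: le_trans (partial_le_code q (N + m.+1)).
apply: le_trans (partial_gap _ (ltW pq) Umq nUmp); last by rewrite addnS ltnS leq_addl.
by rewrite lerD2r partial_nondecreasing // leEnat leq_addr.
Qed.

End SeparatingUpsets.

Section OrderTopology.
Context {disp : Order.disp_t} {Q : orderType disp}.

Lemma order_open_subbase (S : set Q) : order_subbase S -> order_open S.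
Proof.
move=> subS x Sx; exists [:: S].
split; [|split] => [S'|S'|y]; last by apply; rewrite mem_seq1.
all: by rewrite mem_seq1 => /eqP->.
Qed.

Lemma second_countable_separating_upsets : order_topology_second_countable (Q := Q) ->
  exists U : nat -> set Q, (forall n p q, p <= q -> U n p -> U n q) /\
                           (forall p q, p < q -> exists n, U n q /\ ~ U n p).
Proof.
move=> [B [/countable_injP [f f_inj] [_ B_base]]].
exists (fun n q => exists b y, [/\ B b, f b = n, b y & y <= q]); split.
  by move=> n p q pq [b [y [Bb fb b_y yp]]]; exists b, y; split => //; apply: le_trans pq.
move=> p q pq; have ray_open : order_open [set z | p < z].
  by apply: order_open_subbase; exists p; right.
have [b [Bb bq bp]] := B_base _ ray_open q pq.
exists (f b); split; first by exists b, q.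
move=> [b' [y [Bb' fb' b'y yp]]]; have eb : b' = b by apply: f_inj; rewrite ?inE.
by move: b'y; rewrite eb => /bp /=; rewrite ltNge yp.
Qed.

Lemma second_countable_embeddable :
  order_topology_second_countable (Q := Q) -> real_order_embeddable Q.
Proof.
by move=> /second_countable_separating_upsets[U [U_upper U_sep]];
  apply: separating_upsets_embeddable U_upper U_sep.
Qed.

Section CutBoxes.
Variables (I J : countType) (lo : I -> Q) (hi : J -> Q).
Hypothesis lo_approx : forall a x, a < x -> exists i, a <= lo i < x.
Hypothesis hi_approx : forall x b, x < b -> exists j, x < hi j <= b.

Definition cut_box (l : seq I * seq J) : set Q :=
  [set q | all (fun i => lo i < q) l.1 && all (fun j => q < hi j) l.2].

Lemma order_open_cut_box l : order_open (cut_box l).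
Proof.
move=> x /andP[/allP lo_x /allP hi_x].
exists ([seq [set q | lo i < q] | i <- l.1] ++ [seq [set q | q < hi j] | j <- l.2]).
split; [|split].
- move=> S; rewrite mem_cat => /orP[] /mapP[k _ ->].
    by exists (lo k); right.
  by exists (hi k); left.
- by move=> S; rewrite mem_cat => /orP[] /mapP[k kl ->]; [apply: lo_x | apply: hi_x].
- move=> y in_all; apply/andP; split; apply/allP => k kl.
    apply: (in_all [set q | lo k < q]).
    by rewrite mem_cat; apply/orP; left; apply/mapP; exists k.
  apply: (in_all [set q | q < hi k]).
  by rewrite mem_cat; apply/orP; right; apply/mapP; exists k.
Qed.

Lemma cut_box_refines (s : seq (set Q)) x :
  (forall S, S \in s -> order_subbase S /\ S x) ->
  exists l, cut_box l x /\ forall y, cut_box l y -> forall S, S \in s -> S y.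
Proof.
elim: s => [|S s IH] sub_x; first by exists ([::], [::]).
have [[l1 l2] [box_x box_s]] : exists l, cut_box l x /\
    forall y, cut_box l y -> forall S, S \in s -> S y.
  by apply: IH => S' S's; apply: sub_x; rewrite in_cons S's orbT.
move: box_x => /andP[lo_x hi_x].
have [[a [->|->]] /= Sx] := sub_x S (mem_head _ _).
- have /hi_approx[j /andP[xj ja]] := Sx.
  exists (l1, j :: l2); split; first by apply/and3P.
  move=> y /and3P[lo_y yj hi_y] S'; rewrite in_cons => /orP[/eqP-> /=|].
    exact: lt_le_trans yj ja.
  by apply: box_s; apply/andP.
- have /lo_approx[i /andP[ai ix]] := Sx.
  exists (i :: l1, l2); split; first by apply/andP; split; first apply/andP.
  move=> y /andP[/andP[iy lo_y] hi_y] S'; rewrite in_cons => /orP[/eqP-> /=|].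
    exact: le_lt_trans ai iy.
  by apply: box_s; apply/andP.
Qed.

Lemma cut_boxes_second_countable : order_topology_second_countable (Q := Q).
Proof.
exists (range cut_box); split; [|split].
- exact: sub_countable (card_image_le cut_box setT) (countableP _).
- by move=> _ [l _ <-]; apply: order_open_cut_box.
- move=> U U_open x Ux; have [s [s_sub [s_x s_U]]] := U_open x Ux.
  have [l [box_x box_s]] : exists l, cut_box l x /\
      forall y, cut_box l y -> forall S, S \in s -> S y.
    by apply: cut_box_refines => S Ss; split; [apply: s_sub | apply: s_x].
  by exists (cut_box l); split; [exists l | | move=> y /box_s; apply: s_U].
Qed.

End CutBoxes.

Lemma real_order_embeddable_dual : real_order_embeddable Q -> real_order_embeddable Q^d.
Proof.
by move=> [g g_incr]; exists (GRing.opp \o g) => p q; rewrite ltEdual /= ltrN2 => /g_incr.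
Qed.

Lemma embeddable_lower_cuts (x0 : Q) : real_order_embeddable Q ->
  exists (I : countType) (lo : I -> Q), forall a x, a < x -> exists i, a <= lo i < x.
Proof.
move=> [g g_incr]; have g_lt := leW_mono (le_mono g_incr).
have rat_between (u v : R) : u < v -> exists r : rat, u < ratr r < v.
  by move=> /rat_in_itvoo[r]; rewrite in_itv /=; exists r.
pose lo (k : (rat * rat) + rat) := match k with
  | inl (r, s) => xget x0 [set q | ratr r < g q < ratr s]
  | inr r => xget x0 [set q | g q < ratr r /\ forall q', g q' < ratr r -> q' <= q]
  end.
exists ((rat * rat) + rat)%type, lo => a x ax.
have [[y /andP[ay yx]] | no_between] := pselect (exists y, a < y < x).
- have [r /andP[ar ry]] := rat_between _ _ (g_incr _ _ ay).
  have [s /andP[ys sx]] := rat_between _ _ (g_incr _ _ yx).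
  exists (inl (r, s)); have /andP[rc cs] : ratr r < g (lo (inl (r, s))) < ratr s.
    have y_between : [set q | ratr r < g q < ratr s] y by rewrite /= ry ys.
    by move: (xgetI x0 y_between).
  apply/andP; split; [apply: ltW|]; rewrite -g_lt.
    exact: lt_trans ar rc.
  exact: lt_trans cs sx.
- have [r /andP[ar rx]] := rat_between _ _ (g_incr _ _ ax).
  have a_max q : g q < ratr r -> q <= a.
    move=> qr; rewrite leNgt; apply/negP => aq; apply: no_between; exists q.
    by rewrite aq /= -g_lt (lt_trans qr rx).
  exists (inr r); have [cr c_max] : g (lo (inr r)) < ratr r /\
      forall q, g q < ratr r -> q <= lo (inr r).
    have a_top : [set c | g c < ratr r /\ forall q, g q < ratr r -> q <= c] a by [].
    by move: (xgetI x0 a_top).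
  by apply/andP; split; [apply: c_max | rewrite -g_lt (lt_trans cr rx)].
Qed.

End OrderTopology.

Lemma embeddable_upper_cuts (disp : Order.disp_t) (Q : orderType disp) (x0 : Q) :
  real_order_embeddable Q ->
  exists (J : countType) (hi : J -> Q), forall x b, x < b -> exists j, x < hi j <= b.
Proof.
move=> /real_order_embeddable_dual /(embeddable_lower_cuts (x0 : Q^d))[J [hi hi_approx]].
exists J, hi => x b xb; have [j] := hi_approx b x xb.
by rewrite leEdual ltEdual andbC; exists j.
Qed.

Lemma embeddable_second_countable (disp : Order.disp_t) (Q : orderType disp) (x0 : Q) :
  real_order_embeddable Q -> order_topology_second_countable (Q := Q).
Proof.
move=> emb; have [I [lo lo_approx]] := embeddable_lower_cuts x0 emb.
have [J [hi hi_approx]] := embeddable_upper_cuts x0 emb.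
exact: cut_boxes_second_countable lo_approx hi_approx.
Qed.

Theorem theorem4p18 (disp : Order.disp_t) (Q : orderType disp) (q0 : Q)
  (hq0 : forall q : Q, q0 <= q) (hcard : exists a b : Q, a != b) :
  [<-> order_topology_second_countable (Q := Q);
       forall (X : Type) (d : X -> X -> Q), Q_pseudoultrametric q0 d ->
         exists (Y : Type) (rho : Y -> Y -> R), pseudoultrametric rho /\ weak_similar d rho;
       forall (X : Type) (d : X -> X -> Q), Q_pseudoultrametric q0 d ->
         exists (Y : Type) (rho : Y -> Y -> R), pseudoultrametric rho /\ comb_similar d rho].
Proof.
split; [|split].
- move=> /second_countable_embeddable[g g_incr] X d d_ultra.
  exact: (embeddable_weak_similar hq0 d_ultra g_incr).
- move=> weak X d /weak[Y [rho [rho_ultra sim]]].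
  by exists Y, rho; split => //; apply: weak_similar_comb_similar.
- move=> comb; apply: (embeddable_second_countable q0).
  have [Y [rho [rho_ultra sim]]] := comb _ _ (max_dist_Q_pseudoultrametric hq0).
  exact: comb_similar_max_dist_embeddable rho_ultra sim.
Qed.
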